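(* Let $n,m\ge 4$ be integers with $n\equiv 0\pmod 4$ and $m\equiv 0 \pmod 4$. Then $\gamma_t(C_n\times C_m)=\gamma_p(C_n\times C_m)=\frac{nm}{4}$.
   Context: All graphs are finite, simple and undirected. $C_n$ denotes the cycle of order $n$ and $G\times H$ the Cartesian product of graphs. For a graph $G$ without isolated vertices: a set $D\subseteq V(G)$ is a total dominating set if every vertex of $G$ (including those in $D$) has a neighbour in $D$; $\gamma_t(G)$ is the minimum size of a total dominating set. A set $D\subseteq V(G)$ is a paired dominating set if every vertex outside $D$ has a neighbour in $D$ and the induced subgraph $G[D]$ has a perfect matching; $\gamma_p(G)$ is the minimum size of a paired dominating set. *)

From mathcomp Require Import all_boot.
Set Implicit Arguments. Unset Strict Implicit. Unset Printing Implicit Defensive.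

(* A (simple, undirected) graph on a finite vertex type T is given by an
   adjacency relation adj : rel T (assumed symmetric and irreflexive where
   relevant; the cycle products below are). *)

Definition cycle_adj (n : nat) : rel 'I_n :=
  fun i j => (j == (i.+1 %% n) :> nat) || (i == (j.+1 %% n) :> nat).

Definition cart_adj (T U : finType) (a : rel T) (b : rel U) : rel (T * U) :=
  fun x y => ((x.1 == y.1) && b x.2 y.2) || (a x.1 y.1 && (x.2 == y.2)).

Definition Cnm_adj (n m : nat) : rel ('I_n * 'I_m) :=
  cart_adj (@cycle_adj n) (@cycle_adj m).

Section Dom.
Variables (T : finType) (adj : rel T).

Definition total_dominating (D : {set T}) : bool :=
  [forall v, [exists u in D, adj v u]].

Definition dominating_outside (D : {set T}) : bool :=
  [forall v, (v \notin D) ==> [exists u in D, adj v u]].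

(* G[D] has a perfect matching, encoded as the partner map f: on D, f is an
   involution sending each vertex to an adjacent vertex of D (adj being
   irreflexive, f v <> v, so the pairs {v, f v} partition D into edges). *)
Definition perfect_matching_induced (D : {set T}) : Prop :=
  exists f : T -> T,
    forall v, v \in D -> [/\ f v \in D, adj v (f v) & f (f v) = v].

Definition paired_dominating (D : {set T}) : Prop :=
  dominating_outside D /\ perfect_matching_induced D.

Definition is_gamma_t (k : nat) : Prop :=
  (exists D : {set T}, total_dominating D /\ #|D| = k) /\
  (forall D : {set T}, total_dominating D -> k <= #|D|).

Definition is_gamma_p (k : nat) : Prop :=
  (exists D : {set T}, paired_dominating D /\ #|D| = k) /\
  (forall D : {set T}, paired_dominating D -> k <= #|D|).

End Dom.

(* A vertex of C_n x C_m has four neighbours, so a total dominating set has at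
   least nm/4 elements.  When 4 divides n and m, this bound is attained by a
   set of disjoint horizontal dominoes: the pairs {(4k, y), (4k+1, y)} with
   y = 0 (mod 4) and {(4k+2, y), (4k+3, y)} with y = 2 (mod 4).  Every vertex
   has a neighbour in it, and its dominoes are edges forming a perfect
   matching, so it is a paired dominating set as well. *)
From mathcomp Require Import all_boot.
Set Implicit Arguments. Unset Strict Implicit. Unset Printing Implicit Defensive.

Lemma leq_card_bigcup (I T : finType) (P : {pred I}) (F : I -> {set T}) :
  #|\bigcup_(i in P) F i| <= \sum_(i in P) #|F i|.
Proof.
apply: (big_ind2 (fun (A : {set T}) k => #|A| <= k)) => [|A a B b leA leB|//].
  by rewrite cards0.
exact: leq_trans (leq_card_setU A B) (leq_add leA leB).
Qed.

Section Domination.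
Variables (T : finType) (adj : rel T).

Lemma paired_dominating_total (D : {set T}) :
  paired_dominating adj D -> total_dominating adj D.
Proof.
move=> [/forallP domD [f matchD]]; apply/forallP => v.
have [vD | /(implyP (domD v)) //] := boolP (v \in D).
by have [fvD adj_vfv _] := matchD v vD; apply/existsP; exists (f v); rewrite fvD.
Qed.

Lemma total_dominating_card (k : nat) (D : {set T}) :
  (forall u, #|[set v | adj v u]| <= k) ->
  total_dominating adj D -> #|T| <= k * #|D|.
Proof.
move=> deg_le /forallP totD.
have coverT : [set: T] \subset \bigcup_(u in D) [set v | adj v u].
  apply/subsetP => v _; have /existsP [u /andP [uD adj_vu]] := totD v.
  by apply/bigcupP; exists u; rewrite ?inE.
rewrite -cardsT mulnC -sum_nat_const.
apply: leq_trans (subset_leq_card coverT) (leq_trans (leq_card_bigcup _ _) _).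
exact: leq_sum.
Qed.

End Domination.

Section Cycle.
Variable n : nat.
Implicit Type i : 'I_n.

Lemma cycle_adj_ordS i : cycle_adj i (ordS i).
Proof. by rewrite /cycle_adj eqxx. Qed.

Lemma cycle_adj_ord_pred i : cycle_adj i (ord_pred i).
Proof. by have /= eq_i := congr1 val (ord_predK i); rewrite /cycle_adj eq_i eqxx orbT. Qed.

Lemma cycle_adjP i j : cycle_adj i j -> i = ordS j \/ i = ord_pred j.
Proof.
case/orP=> /eqP eq_ij; last by left; apply: val_inj.
by right; rewrite -[i]ordSK; congr ord_pred; apply: val_inj.
Qed.

Lemma ordS_mod d i : d %| n -> ordS i = i.+1 %[mod d].
Proof. by move=> dvd_dn; rewrite /= modn_dvdm. Qed.

Lemma ord_pred_mod d i : d %| n -> ord_pred i = i + d.-1 %[mod d].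
Proof.
move=> dvd_dn; have d_gt0 : 0 < d by apply: dvdn_gt0 dvd_dn; case: n i => [[]|].
rewrite -(modnDr (ord_pred i)) -{1}(prednK d_gt0) addnS -addSn.
by rewrite -modnDml -(ordS_mod _ dvd_dn) ord_predK modnDml.
Qed.

End Cycle.

Lemma card_Cnm_neighbours n m (u : 'I_n * 'I_m) : #|[set v | Cnm_adj v u]| <= 4.
Proof.
set nbrs := [set:: [:: (u.1, ordS u.2); (u.1, ord_pred u.2);
                      (ordS u.1, u.2); (ord_pred u.1, u.2)]].
have sub_nbrs : [set v | Cnm_adj v u] \subset nbrs.
  apply/subsetP => -[x y]; rewrite !inE /Cnm_adj /cart_adj /= !xpair_eqE.
  case/orP=> /andP [+ +] => [/eqP-> /cycle_adjP | /cycle_adjP + /eqP->].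
    by case=> ->; rewrite !eqxx ?orbT.
  by case=> ->; rewrite !eqxx ?orbT.
apply: leq_trans (subset_leq_card sub_nbrs) _.
by rewrite cardsE card_size.
Qed.

Definition domino_row (a : nat) : nat := if a < 2 then 0 else 2.

Lemma domino_row_adjacent a b : a < 4 -> b < 4 ->
  [|| b == domino_row ((a + 1) %% 4), b == domino_row ((a + 3) %% 4),
      (b + 1) %% 4 == domino_row a | (b + 3) %% 4 == domino_row a].
Proof. by case: a => [|[|[|[|]]]] // _; case: b => [|[|[|[|]]]]. Qed.

Definition domino_partner n (x : 'I_n) : 'I_n :=
  if odd x then ord_pred x else ordS x.

Lemma odd_ordS n (x : 'I_n) : 2 %| n -> odd (ordS x) = ~~ odd x.
Proof. by move=> dvd2n; rewrite -[LHS](@odd_mod _ 2 erefl) (ordS_mod _ dvd2n) odd_mod. Qed.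

Lemma odd_ord_pred n (x : 'I_n) : 2 %| n -> odd (ord_pred x) = ~~ odd x.
Proof. by move=> dvd2n; rewrite -{2}(ord_predK x) odd_ordS ?negbK. Qed.

Lemma domino_partnerK n : 2 %| n -> involutive (@domino_partner n).
Proof.
move=> dvd2n x; rewrite /domino_partner; case: (boolP (odd x)) => odd_x.
  by rewrite odd_ord_pred // odd_x ord_predK.
by rewrite odd_ordS // odd_x ordSK.
Qed.

Lemma ordS_mod4 n (x : 'I_n) : 4 %| n -> ordS x %% 4 = (x %% 4 + 1) %% 4.
Proof. by move=> dvd4n; rewrite (ordS_mod _ dvd4n) modnDml addn1. Qed.

Lemma ord_pred_mod4 n (x : 'I_n) : 4 %| n -> ord_pred x %% 4 = (x %% 4 + 3) %% 4.
Proof. by move=> dvd4n; rewrite (ord_pred_mod _ dvd4n) modnDml. Qed.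

Lemma domino_row_partner n (x : 'I_n) : 4 %| n ->
  domino_row (domino_partner x %% 4) = domino_row (x %% 4).
Proof.
move=> dvd4n; rewrite /domino_partner -(@odd_mod x 4 erefl).
have := ltn_pmod x (isT : 0 < 4).
case: ifP; rewrite ?ordS_mod4 ?ord_pred_mod4 //; by case: (x %% 4) => [|[|[|[|]]]].
Qed.

Lemma ltn_div2r_dvd d m i : d %| m -> i < m -> i %/ d < m %/ d.
Proof. by move=> dvd_dm lt_im; rewrite ltn_divRL // (leq_ltn_trans (leq_divM i d)). Qed.

Section Dominoes.
Variables (n m : nat).
Hypotheses (dvd4n : 4 %| n) (dvd4m : 4 %| m).

Definition domino_set : {set 'I_n * 'I_m} :=
  [set v : 'I_n * 'I_m | v.2 %% 4 == domino_row (v.1 %% 4)].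

Lemma domino_set_total_dominating : total_dominating (@Cnm_adj n m) domino_set.
Proof.
apply/forallP => -[x y]; apply/existsP; rewrite /Cnm_adj /cart_adj /=.
have := domino_row_adjacent (ltn_pmod x (isT : 0 < 4)) (ltn_pmod y (isT : 0 < 4)).
case/or4P=> in_set.
- by exists (ordS x, y); rewrite inE /= ordS_mod4 // in_set cycle_adj_ordS eqxx orbT.
- by exists (ord_pred x, y); rewrite inE /= ord_pred_mod4 // in_set cycle_adj_ord_pred eqxx orbT.
- by exists (x, ordS y); rewrite inE /= ordS_mod4 // in_set cycle_adj_ordS eqxx.
- by exists (x, ord_pred y); rewrite inE /= ord_pred_mod4 // in_set cycle_adj_ord_pred eqxx.
Qed.

Lemma domino_set_perfect_matching :
  perfect_matching_induced (@Cnm_adj n m) domino_set.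
Proof.
have dvd2n : 2 %| n := dvdn_trans (isT : 2 %| 4) dvd4n.
exists (fun v => (domino_partner v.1, v.2)) => -[x y]; rewrite !inE /= => xy_in.
split; first by rewrite domino_row_partner.
  rewrite /Cnm_adj /cart_adj /domino_partner /= eqxx andbT orbC.
  by case: ifP => _; rewrite ?cycle_adj_ordS ?cycle_adj_ord_pred.
by rewrite domino_partnerK.
Qed.

Lemma card_domino_set : #|domino_set| <= n * (m %/ 4).
Proof.
pose f (v : 'I_n * 'I_m) : 'I_n * 'I_(m %/ 4) :=
  (v.1, Ordinal (ltn_div2r_dvd dvd4m (ltn_ord v.2))).
have f_inj : {in domino_set &, injective f}.
  move=> [x y] [x' y']; rewrite !inE /= => /eqP y_mod /eqP y'_mod.
  case=> eq_x eq_div; rewrite -{}eq_x in y'_mod *.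
  congr (_, _); apply: val_inj.
  by rewrite [LHS](divn_eq y 4) [RHS](divn_eq y' 4) eq_div y_mod y'_mod.
by rewrite (leq_trans (@leq_card_in _ _ f _ f_inj)) // card_prod !card_ord.
Qed.

End Dominoes.

Theorem lemma2p3 (n m : nat) :
  4 <= n -> 4 <= m -> n %% 4 = 0 -> m %% 4 = 0 ->
  is_gamma_t (@Cnm_adj n m) (n * m %/ 4) /\
  is_gamma_p (@Cnm_adj n m) (n * m %/ 4).
Proof.
move=> _ _ /eqP dvd4n /eqP dvd4m.
have dvd4nm : 4 %| n * m := dvdn_mulr m dvd4n.
have lower D : total_dominating (@Cnm_adj n m) D -> n * m %/ 4 <= #|D|.
  move=> totD; have := total_dominating_card (@card_Cnm_neighbours n m) totD.
  by rewrite card_prod !card_ord leq_divLR // (mulnC #|D|).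
have domino_total := domino_set_total_dominating dvd4n dvd4m.
have card_domino : #|domino_set n m| = n * m %/ 4.
  by apply/eqP; rewrite eqn_leq lower // -muln_divA // card_domino_set.
have domino_paired : paired_dominating (@Cnm_adj n m) (domino_set n m).
  split; last exact: domino_set_perfect_matching.
  by apply/forallP => v; apply/implyP => _; apply: (forallP domino_total).
split; split; try by exists (domino_set n m).
  exact: lower.
by move=> D /paired_dominating_total; apply: lower.
Qed.
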